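(* Let $d\geq 2$ and let $\rho^s$ be a state on $H_d=\mathbb{C}^d$ of rank two whose diagonal (in the computational basis) is supported on two indices, i.e. there are $k\neq l$ with $\rho^s_{kk}>0$, $\rho^s_{ll}>0$ and $\rho^s_{kk}+\rho^s_{ll}=1$. Then there exists an incoherent operation $\Lambda$ on $H_d\otimes H_d$ such that $\Lambda(\rho^s\otimes|0\rangle\langle 0|)$ is Bell-nonlocal if and only if $\rho^s$ is coherent.
   Context: Coherence is taken with respect to the computational basis of $H_d$ and the product computational basis of $H_d\otimes H_d$. A state is incoherent if it is diagonal in this basis, and coherent otherwise. An incoherent operation is a completely positive trace-preserving map $\Lambda(\rho)=\sum_j K_j\rho K_j^\dagger$ with $K_j\mathcal{I}K_j^\dagger\subseteq\mathcal{I}$ for all $j$, where $\mathcal{I}$ is the set of incoherent states. A state is Bell-nonlocal if it violates some Bell inequality, i.e. it does not admit a local hidden variable model. *)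

From HB Require Import structures.
From mathcomp Require Import all_boot all_order all_algebra.
From mathcomp Require Import complex mxtens.
From mathcomp Require Import reals.

Set Implicit Arguments.
Unset Strict Implicit.
Unset Printing Implicit Defensive.

Import Order.TTheory GRing.Theory Num.Theory.
Local Open Scope ring_scope.
Local Open Scope complex_scope.

Section QuantumDefs.
Variable R : realType.
Local Notation C := (R[i]).

Definition adjoint m n (A : 'M[C]_(m, n)) : 'M[C]_(n, m) := map_mx (@Num.conj C) A^T.

Definition psd n (A : 'M[C]_n) : Prop :=
  A = adjoint A /\ forall v : 'cV[C]_n, 0 <= (adjoint v *m A *m v) 0 0.

Definition is_state n (rho : 'M[C]_n) : Prop := psd rho /\ \tr rho = 1.

Definition incoherent_state n (rho : 'M[C]_n) : Prop :=
  is_state rho /\ is_diag_mx rho.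

Definition coherent n (rho : 'M[C]_n) : Prop := ~~ is_diag_mx rho.

Definition apply_kraus n m (K : 'I_m -> 'M[C]_n) (rho : 'M[C]_n) : 'M[C]_n :=
  \sum_(j < m) (K j *m rho *m adjoint (K j)).

(* incoherent operation: CPTP map with Kraus operators K_j satisfying
   K_j I K_j^dagger \subseteq I (up to normalisation, i.e. each K_j maps
   incoherent states to diagonal operators). *)
Definition incoherent_operation n m (K : 'I_m -> 'M[C]_n) : Prop :=
  \sum_(j < m) (adjoint (K j) *m K j) = 1%:M /\
  forall (j : 'I_m) (sigma : 'M[C]_n),
    incoherent_state sigma -> is_diag_mx (K j *m sigma *m adjoint (K j)).

Definition povm n o (M : 'I_o -> 'M[C]_n) : Prop :=
  (forall a, psd (M a)) /\ \sum_(a < o) M a = 1%:M.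

(* A bipartite state on C^dA (x) C^dB (indices 'I_(dA*dB), product basis via
   mxtens) admits a local hidden variable model: for every finite choice of
   measurement settings and POVMs, the correlations are given by a
   (finite) local hidden variable model. *)
Definition bell_local dA dB (rho : 'M[C]_(dA * dB)) : Prop :=
  forall (mA mB oA oB : nat)
         (MA : 'I_mA -> 'I_oA -> 'M[C]_dA) (MB : 'I_mB -> 'I_oB -> 'M[C]_dB),
    (forall x, povm (MA x)) -> (forall y, povm (MB y)) ->
    exists (L : nat) (q : 'I_L -> R)
           (pA : 'I_L -> 'I_mA -> 'I_oA -> R) (pB : 'I_L -> 'I_mB -> 'I_oB -> R),
      [/\ (forall l, 0 <= q l) /\ \sum_(l < L) q l = 1,
          (forall l x a, 0 <= pA l x a) /\ (forall l x, \sum_(a < oA) pA l x a = 1),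
          (forall l y b, 0 <= pB l y b) /\ (forall l y, \sum_(b < oB) pB l y b = 1) &
          forall x y a b,
            \tr (rho *m (MA x a *t MB y b)) =
            (\sum_(l < L) q l * pA l x a * pB l y b)%:C].

Definition bell_nonlocal dA dB (rho : 'M[C]_(dA * dB)) : Prop :=
  ~ bell_local rho.

Definition ket0bra d : 'M[C]_d :=
  \matrix_(i, j) ((nat_of_ord i == 0%N) && (nat_of_ord j == 0%N))%:R.

End QuantumDefs.

(* If rho is diagonal, rho (x) |0><0| is incoherent, an incoherent operation keeps
   it diagonal, and a diagonal bipartite state has the local hidden variable model
   whose hidden variable is the product-basis index.  Conversely, positivity forces a
   state whose diagonal lives on the levels k, l to vanish outside the {k, l} block,
   so it is [[a, c], [c^*, b]] there and coherence means c <> 0.  The incoherent CNOT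
   permutation |i, j> -> |i, j - i> turns rho (x) |0><0| into the two-qubit state
   a |kk><kk| + c |kk><ll| + c^* |ll><kk| + b |ll><ll|, for which suitable binary
   measurements reach the CHSH value 2 + 2 t^2 with t = |c|^2 / (1 + |c|^2) > 0,
   above the bound 2 obeyed by every local hidden variable model. *)

From mathcomp Require Import all_boot all_order all_algebra.
From mathcomp Require Import complex mxtens reals.
From mathcomp Require Import ring lra.
From mathcomp Require Import fingroup perm.
Import Order.TTheory GRing.Theory Num.Theory.

Set Implicit Arguments.
Unset Strict Implicit.
Unset Printing Implicit Defensive.

Local Open Scope complex_scope.
Local Open Scope ring_scope.

Section Quantum.
Variable R : realType.
Local Notation C := R[i].

(** * Positive semidefinite matrices *)

Lemma adjointE m n (A : 'M[C]_(m, n)) i j : adjoint A i j = (A j i)^*.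
Proof. by rewrite !mxE. Qed.

Lemma adjointM m n p (A : 'M[C]_(m, n)) (B : 'M[C]_(n, p)) :
  adjoint (A *m B) = adjoint B *m adjoint A.
Proof. by rewrite /adjoint trmx_mul map_mxM. Qed.

Lemma adjointK m n (A : 'M[C]_(m, n)) : adjoint (adjoint A) = A.
Proof. by apply/matrixP=> i j; rewrite !mxE conjCK. Qed.

Lemma adjointD m n (A B : 'M[C]_(m, n)) : adjoint (A + B) = adjoint A + adjoint B.
Proof. by apply/matrixP=> i j; rewrite !mxE rmorphD. Qed.

Lemma adjointZ m n (x : C) (A : 'M[C]_(m, n)) : adjoint (x *: A) = x^* *: adjoint A.
Proof. by apply/matrixP=> i j; rewrite !mxE rmorphM. Qed.

Lemma adjoint_delta n (i : 'I_n) : adjoint (delta_mx i 0 : 'cV[C]_n) = delta_mx 0 i.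
Proof. by apply/matrixP=> a b; rewrite !mxE conjC_nat andbC. Qed.

Lemma form_delta n (A : 'M[C]_n) i j :
  adjoint (delta_mx i 0 : 'cV_n) *m A *m delta_mx j 0 = (A i j)%:M.
Proof. by apply/matrixP=> a b; rewrite !ord1 adjoint_delta -rowE -colE !mxE mulr1n. Qed.

Lemma psd0 n : psd (0 : 'M[C]_n).
Proof.
split; first by apply/matrixP=> i j; rewrite !mxE conjC0.
by move=> v; rewrite mulmx0 mul0mx mxE.
Qed.

Lemma psdD n (A B : 'M[C]_n) : psd A -> psd B -> psd (A + B).
Proof.
move=> [hA fA] [hB fB]; split; first by rewrite adjointD -hA -hB.
by move=> v; rewrite mulmxDr mulmxDl mxE addr_ge0.
Qed.

Lemma psd_sum n m (F : 'I_m -> 'M[C]_n) : (forall j, psd (F j)) -> psd (\sum_j F j).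
Proof. by move=> psdF; apply: (big_ind (@psd R n)) => //; [exact: psd0 | exact: psdD]. Qed.

Lemma psd_congr n p (K : 'M[C]_(p, n)) (A : 'M[C]_n) :
  psd A -> psd (K *m A *m adjoint K).
Proof.
move=> [hA fA]; split; first by rewrite !adjointM adjointK -hA mulmxA.
by move=> v; have := fA (adjoint K *m v); rewrite adjointM adjointK !mulmxA.
Qed.

Lemma psd_diag_ge0 n (A : 'M[C]_n) i : psd A -> 0 <= A i i.
Proof. by move=> [_ fA]; have := fA (delta_mx i 0); rewrite form_delta mxE eqxx. Qed.

Lemma psd_conjE n (A : 'M[C]_n) i j : psd A -> A j i = (A i j)^*.
Proof. by move=> [hA _]; rewrite {1}hA adjointE. Qed.

Lemma psd_diag_eq0 n (A : 'M[C]_n) i j : psd A -> A i i = 0 -> A i j = 0.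
Proof.
move=> psdA Aii0; have [<-//|ij] := eqVneq i j.
apply/eqP; apply: contraT => Aij_neq0; set m := A i j in Aij_neq0.
have Ajj_real : (A j j)^* = A j j by rewrite -psd_conjE.
(* With [x^* m = -(A j j + 1) / 2], the form at [x e_i + e_j] equals [-1]. *)
set x := - ((A j j + 1) / (2 * m^*)).
have xm : x^* * m = - ((A j j + 1) / 2).
  rewrite /x rmorphN fmorph_div rmorphD rmorphM /= conjCK Ajj_real rmorph1 conjC_nat.
  by field; rewrite Aij_neq0 ?pnatr_eq0.
have := (proj2 psdA) (x *: delta_mx i 0 + delta_mx j 0 : 'cV_n).
rewrite adjointD adjointZ !mulmxDl !mulmxDr -!scalemxAl -!scalemxAr !form_delta.
rewrite !mxE !eqxx !mulr1n Aii0 (psd_conjE i j psdA) -/m mulr0 mulr0 add0r.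
have -> : x^* * m + (x * m^* + A j j) = -1.
  have xm' : x * m^* = - ((A j j + 1) / 2).
    by rewrite /x; field; rewrite conjC_eq0 Aij_neq0 ?pnatr_eq0.
  by rewrite xm xm'; field.
by rewrite ler0N1.
Qed.

Lemma psd_diag n (D : 'M[C]_n) : is_diag_mx D -> (forall i, 0 <= D i i) -> psd D.
Proof.
move=> /is_diag_mxP D_diag D_ge0; split.
  apply/matrixP=> i j; rewrite adjointE; have [<-|ij] := eqVneq i j.
    by rewrite conj_Creal // ger0_real.
  by rewrite !D_diag ?conjC0 // eq_sym.
move=> v; rewrite -mulmxA mxE; apply: sumr_ge0 => i _.
rewrite [(D *m v) i 0]mxE (bigD1 i) //= big1 ?addr0 => [|j ji].
  by rewrite !mxE mulrCA mulr_ge0 // mulrC mul_conjC_ge0.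
by rewrite D_diag ?mul0r // eq_sym.
Qed.

(** * Matrices supported on two levels *)

Section TwoLevel.
Variables (n : nat) (k l : 'I_n).
Hypothesis kl : k != l.
Let lk : l != k. Proof. by rewrite eq_sym. Qed.

Definition level (i : 'I_n) : option bool :=
  if i == k then Some false else if i == l then Some true else None.

Definition twolvl_mx (p q r s e : C) : 'M[C]_n :=
  \matrix_(i, j) match level i, level j with
    | Some false, Some false => p | Some false, Some true => q
    | Some true, Some false => r | Some true, Some true => s
    | None, None => if i == j then e else 0
    | _, _ => 0
    end.

Variant level_spec (i : 'I_n) : option bool -> Type :=
  | LevelK of i = k : level_spec i (Some false)
  | LevelL of i = l : level_spec i (Some true)
  | LevelOut of i != k & i != l : level_spec i None.

Lemma levelP i : level_spec i (level i).
Proof.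
rewrite /level; have [->|ik] := eqVneq i k; first exact: LevelK.
by have [->|il] := eqVneq i l; constructor.
Qed.

Lemma level_k : level k = Some false.
Proof. by rewrite /level eqxx. Qed.

Lemma level_l : level l = Some true.
Proof. by rewrite /level (negbTE lk) eqxx. Qed.

Lemma level_out i : i != k -> i != l -> level i = None.
Proof. by rewrite /level => /negbTE-> /negbTE->. Qed.

Lemma twolvl_mx_kk p q r s e : twolvl_mx p q r s e k k = p.
Proof. by rewrite mxE level_k. Qed.
Lemma twolvl_mx_kl p q r s e : twolvl_mx p q r s e k l = q.
Proof. by rewrite mxE level_k level_l. Qed.
Lemma twolvl_mx_lk p q r s e : twolvl_mx p q r s e l k = r.
Proof. by rewrite mxE level_k level_l. Qed.
Lemma twolvl_mx_ll p q r s e : twolvl_mx p q r s e l l = s.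
Proof. by rewrite mxE level_l. Qed.

Lemma twolvl_mx_out p q r s i j : level i = None \/ level j = None ->
  twolvl_mx p q r s 0 i j = 0.
Proof.
rewrite mxE; case: (levelP i) => [_|_|_ _]; case: (levelP j) => [_|_|_ _] //=.
all: try by case.
by case: ifP.
Qed.

Lemma addmx_twolvl p q r s e p' q' r' s' e' :
  twolvl_mx p q r s e + twolvl_mx p' q' r' s' e' =
  twolvl_mx (p + p') (q + q') (r + r') (s + s') (e + e').
Proof.
apply/matrixP=> i j; rewrite !mxE.
case: (level i) => [[]|]; case: (level j) => [[]|]; rewrite ?addr0 //.
by case: ifP; rewrite ?addr0.
Qed.

Lemma twolvl_mx1 : twolvl_mx 1 0 0 1 1 = 1%:M.
Proof.
apply/matrixP=> i j; rewrite !mxE.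
case: (levelP i) => [->|->|ik il]; case: (levelP j) => [->|->|jk jl] //=;
  rewrite ?eqxx ?(negbTE kl) // eq_sym ?(negbTE kl) //.
- by rewrite (negbTE jk).
- by rewrite (negbTE jl).
- by rewrite eq_sym (negbTE ik).
- by rewrite eq_sym (negbTE il).
- by rewrite eq_sym; case: eqP.
Qed.

Lemma mul_twolvl_mx m p q r s e (Y : 'M[C]_(n, m)) i j :
  (twolvl_mx p q r s e *m Y) i j =
  match level i with
  | Some false => p * Y k j + q * Y l j
  | Some true => r * Y k j + s * Y l j
  | None => e * Y i j
  end.
Proof.
rewrite mxE (bigD1 k) //= (bigD1 l) //= !mxE level_k level_l addrA.
case: (levelP i) => [->|->|ik il]; rewrite ?level_k ?level_l ?level_out //.
- by rewrite big1 ?addr0 // => a /andP [ak al]; rewrite mxE level_k level_out ?mul0r.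
- by rewrite big1 ?addr0 // => a /andP [ak al]; rewrite mxE level_l level_out ?mul0r.
rewrite !mul0r !add0r (bigD1 i) /= ?ik ?il // mxE level_out // eqxx big1 ?addr0 //.
by move=> a /andP [/andP [ak al] ai]; rewrite mxE !level_out // eq_sym (negbTE ai) mul0r.
Qed.

Lemma mxtrace_mul_twolvl_mx p q r s (Y : 'M[C]_n) :
  \tr (twolvl_mx p q r s 0 *m Y) = p * Y k k + q * Y l k + r * Y k l + s * Y l l.
Proof.
rewrite /mxtrace (bigD1 k) //= (bigD1 l) //= big1 ?addr0.
  by rewrite !mul_twolvl_mx level_k level_l addrA.
by move=> a /andP [ak al]; rewrite mul_twolvl_mx level_out ?mul0r.
Qed.

Lemma form_twolvl_mx p q r s e (v : 'cV[C]_n) :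
  (adjoint v *m twolvl_mx p q r s e *m v) 0 0 =
  (v k 0)^* * (p * v k 0 + q * v l 0) + (v l 0)^* * (r * v k 0 + s * v l 0)
  + e * \sum_(i | (i != k) && (i != l)) (v i 0)^* * v i 0.
Proof.
rewrite -mulmxA mxE (bigD1 k) //= (bigD1 l) //= !mul_twolvl_mx level_k level_l.
rewrite !adjointE addrA mulr_sumr; congr (_ + _); apply: eq_bigr => i /andP [ik il].
by rewrite adjointE mul_twolvl_mx level_out // mulrCA.
Qed.

Lemma adjoint_twolvl_mx p q r s e :
  adjoint (twolvl_mx p q r s e) = twolvl_mx p^* r^* q^* s^* e^*.
Proof.
apply/matrixP=> i j; rewrite !mxE.
case: (level i) => [[]|]; case: (level j) => [[]|]; rewrite ?conjC0 //.
by rewrite eq_sym; case: ifP; rewrite ?conjC0.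
Qed.

Lemma psd_twolvl_mx p q s e : p^* = p -> s^* = s -> 0 <= e ->
  (forall x y, 0 <= x^* * (p * x + q * y) + y^* * (q^* * x + s * y)) ->
  psd (twolvl_mx p q q^* s e).
Proof.
move=> p_real s_real e_ge0 block_ge0; split.
  by rewrite adjoint_twolvl_mx conjCK p_real s_real (conj_Creal (ger0_real e_ge0)).
move=> v; rewrite form_twolvl_mx addr_ge0 // mulr_ge0 // sumr_ge0 // => i _.
by rewrite mulrC mul_conjC_ge0.
Qed.

Lemma twolvl_mx_diag p s : is_diag_mx (twolvl_mx p 0 0 s 0).
Proof.
apply/is_diag_mxP => i j; rewrite mxE.
case: (levelP i) => [->|->|_ _]; case: (levelP j) => [->|->|_ _]; rewrite ?eqxx //.
by case: ifP.
Qed.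

End TwoLevel.

Lemma twolvl_mx_inj n m (f : 'I_n -> 'I_m) k l p q r s e i j : injective f ->
  twolvl_mx (f k) (f l) p q r s e (f i) (f j) = twolvl_mx k l p q r s e i j.
Proof. by move=> f_inj; rewrite !mxE /level !(inj_eq f_inj). Qed.

Lemma state_twolvl n (rho : 'M[C]_n) k l : is_state rho -> k != l ->
  rho k k + rho l l = 1 -> rho = twolvl_mx k l (rho k k) (rho k l) (rho l k) (rho l l) 0.
Proof.
move=> [psd_rho tr_rho] kl rho_kl.
have lk : l != k by rewrite eq_sym.
have diag0 i : i != k -> i != l -> rho i i = 0.
  move: tr_rho; rewrite /mxtrace (bigD1 k) //= (bigD1 l) //= addrA rho_kl.
  move=> /(congr1 (fun x => -1 + x)); rewrite addKr addNr => /psumr_eq0P rest0 ik il.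
  by rewrite rest0 ?ik ?il // => a _; exact: psd_diag_ge0.
have row0 i j : i != k -> i != l -> rho i j = 0.
  by move=> ik il; apply: psd_diag_eq0 => //; exact: diag0.
have col0 i j : j != k -> j != l -> rho i j = 0.
  by move=> jk jl; rewrite (psd_conjE j i psd_rho) row0 ?conjC0.
apply/matrixP=> i j; rewrite mxE.
case: (levelP k l i) => [->|->|ik il]; case: (levelP k l j) => [->|->|jk jl] //.
1,2: by rewrite col0.
1,2: by rewrite row0.
by rewrite row0 //; case: ifP.
Qed.

(** * Incoherent operations *)

Lemma adjoint_perm_mx m (s : 'S_m) : adjoint (perm_mx s : 'M[C]_m) = perm_mx s^-1.
Proof.
by apply/matrixP=> i j; rewrite !mxE conjC_nat -{1}(permKV s i) (inj_eq perm_inj) eq_sym.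
Qed.

Definition perm_kraus m (s : 'S_m) : 'I_1 -> 'M[C]_m := fun=> perm_mx s.

Lemma apply_kraus_perm m (s : 'S_m) (X : 'M[C]_m) :
  apply_kraus (perm_kraus s) X = \matrix_(i, j) X (s i) (s j).
Proof.
rewrite /apply_kraus big_ord1 adjoint_perm_mx -row_permE -col_permE.
by apply/matrixP=> i j; rewrite !mxE.
Qed.

Lemma incoherent_perm m (s : 'S_m) : incoherent_operation (perm_kraus s).
Proof.
split; first by rewrite big_ord1 adjoint_perm_mx -perm_mxM mulVg perm_mx1.
move=> j sigma [_ /is_diag_mxP sigma_diag]; have := apply_kraus_perm s sigma.
rewrite /apply_kraus big_ord1 => ->; apply/is_diag_mxP => a b ab.
by rewrite mxE; apply: sigma_diag; apply: contra ab => /eqP/val_inj/perm_inj->.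
Qed.

Section Cnot.
Variable n : nat.
Local Notation pair_idx := (@mxtens_index n.+1 n.+1).

Definition cnot_fun (x : 'I_(n.+1 * n.+1)) : 'I_(n.+1 * n.+1) :=
  let: (i1, i2) := mxtens_unindex x in pair_idx (i1, i2 - i1).

Lemma cnot_funE i1 i2 : cnot_fun (pair_idx (i1, i2)) = pair_idx (i1, i2 - i1).
Proof. by rewrite /cnot_fun mxtens_indexK. Qed.

Lemma cnot_fun_inj : injective cnot_fun.
Proof.
move=> x y; case: (mxtens_indexP x) => i1 i2; case: (mxtens_indexP y) => j1 j2.
rewrite !cnot_funE => /(can_inj (@mxtens_indexK _ _))/eqP.
by rewrite xpair_eqE => /andP [/eqP <- /eqP e]; rewrite -(subrK i1 i2) e subrK.
Qed.

Lemma ord_subr_eq0 (x y : 'I_n.+1) : (nat_of_ord (x - y) == 0%N) = (x == y).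
Proof. by rewrite -[0%N]/(nat_of_ord (0 : 'I_n.+1)) -[_ == _]/((x - y) == 0) subr_eq0. Qed.

Definition cnot : 'S_(n.+1 * n.+1) := perm cnot_fun_inj.

Lemma cnot_twolvl (k l : 'I_n.+1) p q r s : k != l ->
  apply_kraus (perm_kraus cnot) (twolvl_mx k l p q r s 0 *t ket0bra R n.+1) =
  twolvl_mx (pair_idx (k, k)) (pair_idx (l, l)) p q r s 0.
Proof.
move=> kl; rewrite apply_kraus_perm; apply/matrixP=> x y; rewrite mxE.
case: (mxtens_indexP x) => i1 i2; case: (mxtens_indexP y) => j1 j2.
rewrite !permE !cnot_funE tensmxE [ket0bra _ _ _ _]mxE !ord_subr_eq0.
have diag_level a b :
    b != a -> level (pair_idx (k, k)) (pair_idx (l, l)) (pair_idx (a, b)) = None.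
  move=> ba; apply: level_out; rewrite (inj_eq (can_inj (@mxtens_indexK _ _))) xpair_eqE;
    by apply: contra ba => /andP [/eqP-> /eqP->].
have [<-|i21] := eqVneq i2 i1; last first.
  by rewrite mulr0 twolvl_mx_out //; left; exact: diag_level.
have [<-|j21] := eqVneq j2 j1; last first.
  by rewrite mulr0 twolvl_mx_out //; right; exact: diag_level.
rewrite mulr1 (@twolvl_mx_inj _ _ (fun i => pair_idx (i, i))) //.
by move=> a b /(can_inj (@mxtens_indexK _ _)) [].
Qed.

End Cnot.

Lemma mxtrace_tens m n (A : 'M[C]_m) (B : 'M[C]_n) : \tr (A *t B) = \tr A * \tr B.
Proof.
rewrite /mxtrace mulr_sum; apply: eq_bigr => I _.
by case: (mxtens_indexP I) => i j; rewrite mxtens_indexK tensmxE.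
Qed.

Lemma incoherent_tens m n (A : 'M[C]_m) (B : 'M[C]_n) :
  incoherent_state A -> incoherent_state B -> incoherent_state (A *t B).
Proof.
move=> [[psdA trA] /is_diag_mxP A_diag] [[psdB trB] /is_diag_mxP B_diag].
have AB_diag : is_diag_mx (A *t B).
  apply/is_diag_mxP => I J.
  case: (mxtens_indexP I) => i1 i2; case: (mxtens_indexP J) => j1 j2.
  rewrite tensmxE; have [<-|/A_diag->] := eqVneq i1 j1; last by rewrite mul0r.
  by have [<-|/B_diag->] := eqVneq i2 j2; rewrite ?eqxx ?mulr0.
split=> //; split; last by rewrite mxtrace_tens trA trB mulr1.
apply: psd_diag => // I; case: (mxtens_indexP I) => i1 i2.
by rewrite tensmxE mulr_ge0 ?psd_diag_ge0.
Qed.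

Lemma ket0bra_incoherent n : incoherent_state (ket0bra R n.+1).
Proof.
have ket0_diag : is_diag_mx (ket0bra R n.+1).
  apply/is_diag_mxP => i j; rewrite mxE; apply: contraNeq.
  by rewrite pnatr_eq0 eqb0 negbK => /andP [/eqP i0 /eqP j0]; rewrite i0 j0.
split=> //; split; last first.
  rewrite /mxtrace (bigD1 ord0) //= mxE big1 ?addr0 // => i /negbTE i_neq0.
  by rewrite mxE -[nat_of_ord i == 0%N]/(i == ord0) i_neq0.
by apply: psd_diag => // i; rewrite mxE ler0n.
Qed.

Lemma incoherent_apply_kraus n m (K : 'I_m -> 'M[C]_n) (X : 'M[C]_n) :
  incoherent_operation K -> incoherent_state X -> incoherent_state (apply_kraus K X).
Proof.
move=> [K_tp K_inc] incX; have [[psdX trX] _] := incX.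
split; last first.
  apply/is_diag_mxP => i j ij; rewrite summxE big1 // => a _.
  by move/is_diag_mxP: (K_inc a X incX) => ->.
split; first by apply: psd_sum => a; exact: psd_congr.
rewrite /apply_kraus raddf_sum /=.
under eq_bigr => a _ do rewrite mxtrace_mulC mulmxA.
by rewrite -raddf_sum /= -mulmx_suml K_tp mul1mx trX.
Qed.

(** * Bell locality and the CHSH inequality *)

Lemma mxtrace_mul_diag n (D Y : 'M[C]_n) :
  is_diag_mx D -> \tr (D *m Y) = \sum_i D i i * Y i i.
Proof.
move=> /is_diag_mxP D_diag; apply: eq_bigr => i _.
by rewrite mxE (bigD1 i) //= big1 ?addr0 // => j ji; rewrite D_diag ?mul0r // eq_sym.
Qed.

Lemma sum_Re_ge0 m (F : 'I_m -> C) :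
  (forall i, 0 <= F i) -> (\sum_i complex.Re (F i))%:C = \sum_i F i.
Proof.
move=> F_ge0; rewrite rmorph_sum; apply: eq_bigr => i _.
exact: RRe_real (ger0_real (F_ge0 i)).
Qed.

(* The hidden variable is the product-basis index [I], drawn with probability [D I I]. *)
Lemma diag_bell_local dA dB (D : 'M[C]_(dA * dB)) : incoherent_state D -> bell_local D.
Proof.
move=> [[psdD trD] D_diag] mA mB oA oB MA MB povmA povmB.
pose idxA (I : 'I_(dA * dB)) := (mxtens_unindex I).1.
pose idxB (I : 'I_(dA * dB)) := (mxtens_unindex I).2.
have diagA x a i : 0 <= MA x a i i by apply: psd_diag_ge0; exact: (povmA x).1.
have diagB y b i : 0 <= MB y b i i by apply: psd_diag_ge0; exact: (povmB y).1.
exists (dA * dB), (fun I => complex.Re (D I I)),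
  (fun I x a => complex.Re (MA x a (idxA I) (idxA I))),
  (fun I y b => complex.Re (MB y b (idxB I) (idxB I))); split.
- split=> [I|]; first by rewrite -ler0c RRe_real ?ger0_real ?psd_diag_ge0.
  by apply: complexI; rewrite sum_Re_ge0 => [|I]; [exact: trD | exact: psd_diag_ge0].
- split=> [I x a|I x]; first by rewrite -ler0c RRe_real ?ger0_real.
  by apply: complexI; rewrite sum_Re_ge0 // -summxE (povmA x).2 mxE eqxx.
- split=> [I y b|I y]; first by rewrite -ler0c RRe_real ?ger0_real.
  by apply: complexI; rewrite sum_Re_ge0 // -summxE (povmB y).2 mxE eqxx.
move=> x y a b; rewrite mxtrace_mul_diag // rmorph_sum; apply: eq_bigr => I _.
rewrite !rmorphM /= !RRe_real ?ger0_real ?diagA ?diagB ?psd_diag_ge0 //.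
by case: (mxtens_indexP I) => i j; rewrite /idxA /idxB mxtens_indexK tensmxE mulrA.
Qed.

Lemma lecR_nat (x : R) n : (x%:C <= n%:R) = (x <= n%:R).
Proof. by rewrite -lecR rmorph_nat. Qed.

Lemma big_ord2 (V : nmodType) (F : 'I_2 -> V) : \sum_(a < 2) F a = F 0 + F 1.
Proof. by rewrite big_ord_recl big_ord1; congr (_ + F _); exact: val_inj. Qed.

Lemma bias_le1 (p : 'I_2 -> R) :
  (forall a, 0 <= p a) -> \sum_a p a = 1 -> `|p 0 - p 1| <= 1.
Proof.
by move=> p_ge0; rewrite big_ord2 ler_norml => p1; have := p_ge0 0; have := p_ge0 1; lra.
Qed.

Lemma chsh_bias_le2 (a0 a1 b0 b1 : R) :
  `|a0| <= 1 -> `|a1| <= 1 -> `|b0| <= 1 -> `|b1| <= 1 ->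
  a0 * b0 + a0 * b1 + a1 * b0 - a1 * b1 <= 2.
Proof.
rewrite !ler_norml => /andP [? ?] /andP [? ?] /andP [? ?] /andP [? ?].
by have [] := lerP b1 b0; nra.
Qed.

Definition corr dA dB (rho : 'M[C]_(dA * dB))
    (A : 'I_2 -> 'M[C]_dA) (B : 'I_2 -> 'M[C]_dB) :=
  \tr (rho *m (A 0 *t B 0)) - \tr (rho *m (A 0 *t B 1))
  - \tr (rho *m (A 1 *t B 0)) + \tr (rho *m (A 1 *t B 1)).

Definition chsh dA dB (rho : 'M[C]_(dA * dB)) (A : 'I_2 -> 'I_2 -> 'M[C]_dA)
    (B : 'I_2 -> 'I_2 -> 'M[C]_dB) :=
  corr rho (A 0) (B 0) + corr rho (A 0) (B 1) + corr rho (A 1) (B 0) - corr rho (A 1) (B 1).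

Lemma bell_local_chsh dA dB (rho : 'M[C]_(dA * dB)) A B :
  bell_local rho -> (forall x, povm (A x)) -> (forall y, povm (B y)) -> chsh rho A B <= 2.
Proof.
move=> loc povmA povmB.
have [L [q [pA [pB [[q_ge0 q1] [pA_ge0 pA1] [pB_ge0 pB1] trE]]]]] := loc _ _ _ _ A B povmA povmB.
pose bias (p : 'I_2 -> R) := p 0 - p 1.
have corrE x y : corr rho (A x) (B y) = (\sum_l q l * (bias (pA l x) * bias (pB l y)))%:C.
  rewrite /corr !trE -!rmorphB -rmorphD -!sumrB -big_split /=; congr _%:C.
  by apply: eq_bigr => l _; rewrite /bias; ring.
rewrite /chsh !corrE -!rmorphD -rmorphB lecR_nat -!big_split -sumrB /=.
apply: (@le_trans _ _ (\sum_l q l * 2)); last by rewrite -mulr_suml q1 mul1r.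
apply: ler_sum => l _; have := q_ge0 l.
have := chsh_bias_le2 (bias_le1 (pA_ge0 l 0) (pA1 l 0)) (bias_le1 (pA_ge0 l 1) (pA1 l 1))
  (bias_le1 (pB_ge0 l 0) (pB1 l 0)) (bias_le1 (pB_ge0 l 1) (pB1 l 1)).
rewrite /bias; nra.
Qed.

Section BinaryMeasurement.
Variables (n : nat) (k l : 'I_n).
Hypothesis kl : k != l.

(* [(1 + O) / 2] for the observable [O = [[z, u], [u^*, -z]]] on the levels [k, l]. *)
Definition effect (z u : C) : 'M[C]_n :=
  twolvl_mx k l ((1 + z) / 2) (u / 2) (u^* / 2) ((1 - z) / 2) 2^-1.

Definition binmeas (z u : C) (a : 'I_2) : 'M[C]_n := effect ((-1) ^+ a * z) ((-1) ^+ a * u).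

Lemma psd_effect z u : z^* = z -> z ^+ 2 + u * u^* <= 1 -> psd (effect z u).
Proof.
move=> z_real zu_le1; rewrite /effect.
have -> : u^* / 2 = (u / 2)^* by rewrite fmorph_div rmorph_nat.
apply: psd_twolvl_mx; rewrite ?invr_ge0 ?ler0n // ?fmorph_div ?rmorph_nat /=.
- by rewrite rmorphD rmorph1 /= z_real.
- by rewrite rmorphB rmorph1 /= z_real.
(* [4 x^* M x] splits as a sum of squares thanks to [z^2 + |u|^2 <= 1]. *)
move=> x y; set v1 := (1 - z) * y + u^* * x; set v2 := (1 + z) * x + u * y.
have v1J : v1^* = (1 - z) * y^* + u * x^*.
  by rewrite /v1 rmorphD !rmorphM rmorphB rmorph1 /= z_real conjCK.
have v2J : v2^* = (1 + z) * x^* + u^* * y^*.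
  by rewrite /v2 rmorphD !rmorphM rmorphD rmorph1 /= z_real.
have -> : x^* * ((1 + z) / 2 * x + u / 2 * y) + y^* * (u^* / 2 * x + (1 - z) / 2 * y) =
    (v1 * v1^* + v2 * v2^* + (1 - (z ^+ 2 + u * u^*)) * (x * x^* + y * y^*)) / 4.
  by rewrite v1J v2J /v1 /v2; field.
rewrite divr_ge0 ?ler0n // !addr_ge0 ?mul_conjC_ge0 // mulr_ge0 ?subr_ge0 //.
by rewrite addr_ge0 ?mul_conjC_ge0.
Qed.

Lemma povm_binmeas z u : z^* = z -> z ^+ 2 + u * u^* <= 1 -> povm (binmeas z u).
Proof.
move=> z_real zu_le1; split=> [a|].
  apply: psd_effect; first by rewrite rmorphM rmorph_sign; congr (_ * _).
  by rewrite exprMn sqrr_sign mul1r rmorphM rmorph_sign mulrACA -expr2 sqrr_sign mul1r.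
rewrite big_ord2 /binmeas /effect expr0 expr1 !mul1r !mulN1r addmx_twolvl -(twolvl_mx1 kl).
by rewrite rmorphN; congr twolvl_mx; field.
Qed.

End BinaryMeasurement.

Lemma corr_binmeas dA dB (kA lA : 'I_dA) (kB lB : 'I_dB) a b c zA uA zB uB :
  kA != lA -> kB != lB ->
  corr (twolvl_mx (mxtens_index (kA, kB)) (mxtens_index (lA, lB)) a c c^* b 0)
    (binmeas kA lA zA uA) (binmeas kB lB zB uB) =
  (a + b) * zA * zB + c * (uA * uB)^* + c^* * (uA * uB).
Proof.
move=> kAl kBl; have kl : mxtens_index (kA, kB) != mxtens_index (lA, lB).
  by rewrite (inj_eq (can_inj (@mxtens_indexK _ _))) xpair_eqE negb_and kAl.
rewrite /corr !mxtrace_mul_twolvl_mx // !tensmxE /binmeas /effect.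
rewrite !twolvl_mx_kk !twolvl_mx_kl // !twolvl_mx_lk // !twolvl_mx_ll // expr0 expr1.
by rewrite rmorphM; field.
Qed.

Lemma twolvl_bell_nonlocal dA dB (kA lA : 'I_dA) (kB lB : 'I_dB) a b c :
  kA != lA -> kB != lB -> a + b = 1 -> c != 0 ->
  bell_nonlocal (twolvl_mx (mxtens_index (kA, kB)) (mxtens_index (lA, lB)) a c c^* b 0).
Proof.
move=> kAl kBl ab1 c_neq0 loc.
pose r := complex.Re c ^+ 2 + complex.Im c ^+ 2.
have ccE : c * c^* = r%:C by rewrite add_Re2_Im2 normCK.
have r_gt0 : 0 < r by rewrite -ltcR -ccE mul_conjC_gt0.
(* Alice measures [Z] and the [X]-type observable with off-diagonal entry [w];
   Bob measures [Z] tilted by [+-t]; the CHSH value is [2 + 2 t^2]. *)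
pose t := r / (1 + r); pose w := c / (1 + r)%:C.
have r1_gt0 : 0 < 1 + r := addr_gt0 ltr01 r_gt0.
have t_gt0 : 0 < t by rewrite divr_gt0.
have t_lt1 : t < 1 by rewrite ltr_pdivrMr // mul1r ltrDr.
have wJ : w^* = c^* / (1 + r)%:C by rewrite fmorph_div; congr (_ / _); exact: conjc_real.
have cwJ : c * w^* = t%:C by rewrite wJ mulrA ccE fmorph_div.
have cJw : c^* * w = t%:C by rewrite /w mulrA [c^* * c]mulrC ccE fmorph_div.
have wtJ : (w * t%:C)^* = w^* * t%:C by rewrite rmorphM; congr (_ * _); exact: conjc_real.
have wtNJ : (- (w * t%:C))^* = - (w^* * t%:C) by rewrite -wtJ rmorphN.
have wwJ : w * w^* = (r / (1 + r) ^+ 2)%:C.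
  by rewrite wJ mulrACA ccE -invfM -expr2 -rmorphXn -fmorph_div.
clearbody w.
pose A (x : 'I_2) := if x == 0 then binmeas kA lA 1 0 else binmeas kA lA 0 w.
have A_povm (x : 'I_2) : povm (A x).
  rewrite /A; case: ifP => _; apply: (povm_binmeas kAl); rewrite ?conjC1 ?conjC0 //.
    by rewrite expr1n mul0r addr0.
  rewrite expr0n add0r wwJ lecR ler_pdivrMr ?exprn_gt0 // mul1r.
  by rewrite sqrrD expr1n mul1r; have := sqr_ge0 r; lra.
have B_povm y : povm (binmeas kB lB (1 - t ^+ 2)%:C ((-1) ^+ (y : nat) * t%:C)).
  apply: (povm_binmeas kBl); first exact: conjc_real.
  rewrite -normCK normrM normr_sign mul1r ger0_norm ?ler0c ?(ltW t_gt0) //.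
  rewrite -!rmorphXn -rmorphD lecR -subr_ge0.
  have -> : 1 - ((1 - t ^+ 2) ^+ 2 + t ^+ 2) = t ^+ 2 * (1 - t ^+ 2) by ring.
  by rewrite mulr_ge0 ?sqr_ge0 // subr_ge0 expr_le1 ?ltW.
have := bell_local_chsh loc A_povm B_povm.
rewrite /chsh /A eqxx oner_eq0 !corr_binmeas // ab1 expr0 expr1 !mul1r !mulN1r.
rewrite !mul0r conjC0 !mulr0 !add0r !addr0 !mulrN wtNJ wtJ !mulrN !mulrA cwJ cJw.
rewrite -!rmorphM -!rmorphN -!rmorphD -rmorphB lecR_nat.
by have := mulr_gt0 t_gt0 t_gt0; lra.
Qed.

End Quantum.

Theorem mainTheorem3 (R : realType) (d : nat) (rho : 'M[R[i]]_d) :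
  (2 <= d)%N ->
  is_state rho ->
  \rank rho = 2%N ->
  (exists k l : 'I_d,
      [/\ k != l, 0 < rho k k, 0 < rho l l & rho k k + rho l l = 1]) ->
  ((exists (m : nat) (K : 'I_m -> 'M[R[i]]_(d * d)),
       incoherent_operation K /\
       bell_nonlocal (apply_kraus K (rho *t ket0bra R d)))
   <-> coherent rho).
Proof.
case: d rho => [|n] rho _ rho_state _ [k [l [kl _ _ rho_kl]]]; first by case: (k).
have rhoE := state_twolvl rho_state kl rho_kl.
rewrite (psd_conjE k l rho_state.1) in rhoE.
split=> [[m [K [K_inc nonlocal]]] | rho_coh].
  apply/negP => rho_diag; apply/nonlocal/diag_bell_local/(incoherent_apply_kraus K_inc).
  exact: incoherent_tens (conj rho_state rho_diag) (ket0bra_incoherent R n).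
exists 1%N, (perm_kraus R (cnot n)); split; first exact: incoherent_perm.
rewrite rhoE cnot_twolvl //; apply: twolvl_bell_nonlocal => //.
by apply: contra rho_coh => /eqP rho_kl0; rewrite rhoE rho_kl0 conjC0 twolvl_mx_diag.
Qed.
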